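(* Let $c\in\mathcal C^1([0,1])$ with $c>0$, $\alpha>0$, and let $(\bar u,\bar v)$ be a $\mathcal C^1$ stationary solution of system (S) satisfying either (PBC) with $\bar u,\bar v>0$ on $[0,1]$, or (DBC) with $m\le\bar u(x)/x\le M$ and $m\le\bar v(x)/(1-x)\le M$ for $x\in(0,1)$ and constants $0<m\le M$. Let $(u,v)$ be a classical ($\mathcal C^1$) nonnegative solution of system (S) with the same boundary conditions, such that in case (DBC) $u(x,t)\le Kx$ and $v(x,t)\le K(1-x)$ for some constant $K$. Then $$\frac{d}{dt}\mathcal H[u,v]=-\frac{\alpha}{2}\int_0^1\frac{c\,J(u,v,\bar u,\bar v)}{(1+u+v)(1+\bar u+\bar v)}\,dx.$$
   Context: System (S): $\partial_t u+\partial_x(c(x)u)=\frac{\alpha v}{1+u+v}-u$, $\partial_t v-\partial_x(c(x)v)=\frac{\alpha u}{1+u+v}-v$ on $x\in[0,1]$; (DBC): $u(0,t)=0$, $v(1,t)=0$; (PBC): $u(0,t)=u(1,t)$, $v(0,t)=v(1,t)$, $c$ periodic. Lyapunov functional: $\mathcal H[u,v]=\frac12\int_0^1c\Big(\frac{\bar v}{\bar u}(u-\bar u)^2+\frac{\bar u}{\bar v}(v-\bar v)^2\Big)dx$ (for (DBC) the integrand is extended continuously by $0$ at $x=0,1$). $J(u,v,\bar u,\bar v)=\hat u^2[(1+u+v)(\bar u^2+\bar v^2)+2\bar v^2\bar u]+\hat v^2[(1+u+v)(\bar u^2+\bar v^2)+2\bar u^2\bar v]-2\hat u\hat v(\bar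 u^2+\bar v^2+\bar u^2\bar v+\bar u\bar v^2)$ with $\hat u=(u-\bar u)/\bar u$, $\hat v=(v-\bar v)/\bar v$. *)

From Stdlib Require Import Reals Lra.
Open Scope R_scope.

Definition I01 (x : R) : Prop := 0 <= x <= 1.

Definition has_deriv01 (f f' : R -> R) : Prop :=
  forall x, I01 x ->
    limit1_in (fun y => (f y - f x) / (y - x)) (fun y => I01 y /\ y <> x) (f' x) x.

Definition cont01 (f : R -> R) : Prop :=
  forall x, I01 x -> limit1_in f I01 (f x) x.

Definition C1_01 (f : R -> R) : Prop :=
  exists f', has_deriv01 f f' /\ cont01 f'.

Definition Dom (T x t : R) : Prop := I01 x /\ 0 < t < T.

Definition cont2 (T : R) (f : R -> R -> R) : Prop :=
  forall x t, Dom T x t -> forall eps, eps > 0 -> exists delta, delta > 0 /\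
    forall y s, Dom T y s -> Rabs (y - x) < delta -> Rabs (s - t) < delta ->
      Rabs (f y s - f x t) < eps.

Definition pdx (T : R) (f fx : R -> R -> R) : Prop :=
  forall t, 0 < t < T -> has_deriv01 (fun x => f x t) (fun x => fx x t).

Definition pdt (T : R) (f ft : R -> R -> R) : Prop :=
  forall x t, Dom T x t -> derivable_pt_lim (fun s => f x s) t (ft x t).

Definition C1_2 (T : R) (f : R -> R -> R) : Prop :=
  exists fx ft, pdx T f fx /\ pdt T f ft /\ cont2 T f /\ cont2 T fx /\ cont2 T ft.

Definition is_RInt (f : R -> R) (a b I : R) : Prop :=
  exists pr : Riemann_integrable f a b, RiemannInt pr = I.

Inductive BC := PBC | DBC.

(* integrand of the Lyapunov functional (without the factor 1/2).
   In case (DBC), at x = 0 and x = 1 this evaluates to 0 with Rocq's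
   convention x / 0 = 0 (since there u - ub = 0 resp. v - vb = 0 and ub = 0
   resp. vb = 0), i.e. it is the continuous extension by 0. *)
Definition Hdens (cx ub vb u v : R) : R :=
  cx * (vb / ub * (u - ub) ^ 2 + ub / vb * (v - vb) ^ 2).

Definition Jfun (u v ub vb : R) : R :=
  let uh := (u - ub) / ub in
  let vh := (v - vb) / vb in
  uh ^ 2 * ((1 + u + v) * (ub ^ 2 + vb ^ 2) + 2 * vb ^ 2 * ub)
  + vh ^ 2 * ((1 + u + v) * (ub ^ 2 + vb ^ 2) + 2 * ub ^ 2 * vb)
  - 2 * uh * vh * (ub ^ 2 + vb ^ 2 + ub ^ 2 * vb + ub * vb ^ 2).

Definition stationary (alpha : R) (c ub vb : R -> R) : Prop :=
  C1_01 ub /\ C1_01 vb /\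
  has_deriv01 (fun x => c x * ub x)
    (fun x => alpha * vb x / (1 + ub x + vb x) - ub x) /\
  has_deriv01 (fun x => c x * vb x)
    (fun x => - (alpha * ub x / (1 + ub x + vb x) - vb x)).

Definition solution (T alpha : R) (c : R -> R) (u v : R -> R -> R) : Prop :=
  C1_2 T u /\ C1_2 T v /\
  exists ut vt Fu Fv,
    pdt T u ut /\ pdt T v vt /\
    pdx T (fun x t => c x * u x t) Fu /\
    pdx T (fun x t => c x * v x t) Fv /\
    forall x t, Dom T x t ->
      ut x t + Fu x t = alpha * v x t / (1 + u x t + v x t) - u x t /\
      vt x t - Fv x t = alpha * u x t / (1 + u x t + v x t) - v x t.

Definition bc_hyp (bc : BC) (T : R) (c ub vb : R -> R) (u v : R -> R -> R) : Prop :=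
  match bc with
  | PBC =>
      c 0 = c 1 /\ ub 0 = ub 1 /\ vb 0 = vb 1 /\
      (forall x, I01 x -> ub x > 0 /\ vb x > 0) /\
      (forall t, 0 < t < T -> u 0 t = u 1 t /\ v 0 t = v 1 t)
  | DBC =>
      ub 0 = 0 /\ vb 1 = 0 /\
      (exists m M, 0 < m /\ m <= M /\
         forall x, 0 < x < 1 ->
           m <= ub x / x <= M /\ m <= vb x / (1 - x) <= M) /\
      (forall t, 0 < t < T -> u 0 t = 0 /\ v 1 t = 0) /\
      (exists K, forall x t, Dom T x t -> u x t <= K * x /\ v x t <= K * (1 - x))
  end.

From Pilot Require Import Defs.
From Stdlib Require Import Reals Lra.
From Coquelicot Require Coquelicot.
Open Scope R_scope.

(* Differentiating under the integral sign, dH/dt is half the integral of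
   P_t = 2 c (vb uh u_t + ub vh v_t), where uh = (u - ub)/ub and vh = (v - vb)/vb.
   Substituting u_t, v_t from (S) and using the stationary equations, P_t/2 + (alpha/2) Q
   is minus the x-derivative of the flux G = (c^2/2) (vb uh (u - ub) - ub vh (v - vb)),
   Q being the integrand of the right-hand side. Under (PBC) G takes the same value at
   both ends, under (DBC) it vanishes at both, so the integral of P_t/2 + (alpha/2) Q is 0.
   Under (DBC) ub vanishes at 0 and vb at 1; the bounds u <= K x and m x <= ub keep uh
   bounded near 0 (symmetrically vh near 1), and every term of P, P_t and G carrying uh
   also carries a factor vanishing at 0, which makes them jointly continuous. In Q, uh and
   vh are extended continuously to the endpoints as quotients of slopes. *)

(* Coquelicot's [is_RInt] would shadow the one of [Defs] used in the final statement. *)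
Module Lyapunov.
Import Coquelicot.Coquelicot.

(** * Functions on [[0,1]] *)

Definition clamp (a b s : R) : R := Rmax a (Rmin b s).

Lemma clamp_in a b s : a <= b -> a <= clamp a b s <= b.
Proof. unfold clamp, Rmax, Rmin; intros; repeat destruct Rle_dec; lra. Qed.

Lemma clamp_id a b s : a <= s <= b -> clamp a b s = s.
Proof. unfold clamp, Rmax, Rmin; intros; repeat destruct Rle_dec; lra. Qed.

Lemma clamp_lipschitz a b x y : Rabs (clamp a b y - clamp a b x) <= Rabs (y - x).
Proof.
  unfold clamp, Rmax, Rmin, Rabs.
  repeat destruct Rle_dec; repeat destruct Rcase_abs; lra.
Qed.

Lemma I01_clamp x : I01 (clamp 0 1 x).
Proof. apply clamp_in; lra. Qed.

Lemma cont01_const k : cont01 (fun _ => k).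
Proof. intros x _ e He; exists 1; split; [lra|]; intros; rewrite R_dist_eq; exact He. Qed.

Lemma cont01_plus f g : cont01 f -> cont01 g -> cont01 (fun x => f x + g x).
Proof. intros Hf Hg x Hx; apply limit_plus; auto. Qed.

Lemma cont01_minus f g : cont01 f -> cont01 g -> cont01 (fun x => f x - g x).
Proof. intros Hf Hg x Hx; apply limit_minus; auto. Qed.

Lemma cont01_opp f : cont01 f -> cont01 (fun x => - f x).
Proof. intros Hf x Hx; apply limit_Ropp; auto. Qed.

Lemma cont01_mult f g : cont01 f -> cont01 g -> cont01 (fun x => f x * g x).
Proof. intros Hf Hg x Hx; apply limit_mul; auto. Qed.

Lemma cont01_pow f n : cont01 f -> cont01 (fun x => f x ^ n).
Proof.
  intros Hf; induction n as [|n IH]; simpl.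
  - apply cont01_const.
  - apply cont01_mult; auto.
Qed.

Lemma cont01_div f g : cont01 f -> cont01 g -> (forall x, I01 x -> g x <> 0) ->
  cont01 (fun x => f x / g x).
Proof. intros Hf Hg Hg0 x Hx; apply limit_mul; [|apply limit_inv]; auto. Qed.

Lemma deriv01_cont01 f f' : has_deriv01 f f' -> cont01 f.
Proof.
  intros Hd x Hx eps Heps.
  destruct (Hd x Hx 1 Rlt_0_1) as [alp [Halp H]].
  set (K := Rabs (f' x) + 1).
  assert (HK : 0 < K) by (unfold K; pose proof (Rabs_pos (f' x)); lra).
  exists (Rmin alp (eps / K)); split.
  { apply Rmin_pos; [lra|]. apply Rdiv_lt_0_compat; lra. }
  intros y [Hy Hdy]; simpl in *; unfold R_dist in *.
  destruct (Req_dec y x) as [->|Hne].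
  { rewrite Rminus_diag, Rabs_R0; lra. }
  assert (Hq : Rabs ((f y - f x) / (y - x)) <= K).
  { assert (Hb : Rabs ((f y - f x) / (y - x) - f' x) < 1).
    { apply H; split; [split; auto|].
      eapply Rlt_le_trans; [apply Hdy|apply Rmin_l]. }
    pose proof (Rabs_triang_inv ((f y - f x) / (y - x)) (f' x)). unfold K; lra. }
  replace (f y - f x) with ((f y - f x) / (y - x) * (y - x)) by (field; lra).
  rewrite Rabs_mult.
  apply Rle_lt_trans with (K * Rabs (y - x)).
  { apply Rmult_le_compat_r; [apply Rabs_pos|exact Hq]. }
  apply Rlt_le_trans with (K * (eps / K)).
  { apply Rmult_lt_compat_l; [lra|]. eapply Rlt_le_trans; [apply Hdy|apply Rmin_r]. }
  right; field; lra.
Qed.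

Lemma deriv01_is_derive f f' x : has_deriv01 f f' -> 0 < x < 1 -> is_derive f x (f' x).
Proof.
  intros Hd Hx. apply is_derive_Reals. intros eps Heps.
  destruct (Hd x ltac:(unfold I01; lra) eps Heps) as [alp [Halp H]].
  assert (Hp : 0 < Rmin alp (Rmin x (1 - x))) by (repeat apply Rmin_pos; lra).
  exists (mkposreal _ Hp). intros h Hh Hlt; simpl in Hlt.
  pose proof (Rmin_l alp (Rmin x (1 - x))); pose proof (Rmin_r alp (Rmin x (1 - x))).
  pose proof (Rmin_l x (1 - x)); pose proof (Rmin_r x (1 - x)).
  specialize (H (x + h)). simpl in H; unfold R_dist in H.
  replace (x + h - x) with h in H by ring.
  apply H. repeat split; try lra; unfold Rabs in *; destruct Rcase_abs; lra.
Qed.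

Lemma continuity_pt_clamp f : cont01 f -> forall x, continuity_pt (fun y => f (clamp 0 1 y)) x.
Proof.
  intros Hf x eps Heps.
  destruct (Hf (clamp 0 1 x) (I01_clamp x) eps Heps) as [alp [Halp H]].
  exists alp; split; [exact Halp|].
  intros y [_ Hd]; simpl in *; unfold R_dist in *.
  apply H; split; [apply I01_clamp|].
  simpl; unfold R_dist. eapply Rle_lt_trans; [apply clamp_lipschitz|exact Hd].
Qed.

Lemma cont01_of_continuity_pt_clamp f :
  (forall x, continuity_pt (fun y => f (clamp 0 1 y)) x) -> cont01 f.
Proof.
  intros H x Hx eps He. destruct (H x eps He) as [d [Hd H']].
  exists d; split; [exact Hd|]. intros z [Hz Hzd].
  destruct (Req_dec z x) as [->|Hne].
  { rewrite R_dist_eq; exact He. }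
  specialize (H' z). rewrite !clamp_id in H' by (unfold I01 in *; lra).
  apply H'. repeat split; auto.
Qed.

Lemma ex_RInt_cont01 f : cont01 f -> ex_RInt f 0 1.
Proof.
  intros Hf. apply ex_RInt_ext with (fun x => f (clamp 0 1 x)).
  { rewrite Rmin_left, Rmax_right by lra. intros x Hx. rewrite clamp_id by lra. reflexivity. }
  apply (ex_RInt_continuous (V := R_CompleteNormedModule)). intros z _.
  apply continuity_pt_filterlim, continuity_pt_clamp, Hf.
Qed.

Lemma cont01_lower_bound g p m : I01 p -> cont01 g ->
  (forall y, 0 < y < 1 -> m <= g y) -> m <= g p.
Proof.
  intros Hp Hg Hm. destruct (Rle_dec m (g p)) as [|Hn]; [assumption|].
  exfalso. apply Rnot_le_lt in Hn.
  destruct (Hg p Hp (m - g p)) as [alp [Halp H]]; [lra|].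
  set (d := Rmin alp (1/2) / 2).
  assert (Hd : 0 < d < alp /\ d <= 1/4).
  { unfold d; pose proof (Rmin_l alp (1/2)); pose proof (Rmin_r alp (1/2)).
    assert (0 < Rmin alp (1/2)) by (apply Rmin_pos; lra). lra. }
  unfold I01 in Hp.
  set (y := if Rle_dec p (1/2) then p + d else p - d).
  assert (Hy : 0 < y < 1 /\ Rabs (y - p) < alp).
  { unfold y; destruct Rle_dec.
    - replace (p + d - p) with d by ring. rewrite Rabs_right; lra.
    - replace (p - d - p) with (- d) by ring. rewrite Rabs_Ropp, Rabs_right; lra. }
  assert (Hgy : Rabs (g y - g p) < m - g p).
  { apply (H y). split; [unfold I01; lra|apply Hy]. }
  pose proof (Hm y (proj1 Hy)). apply Rabs_def2 in Hgy. lra.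
Qed.

Definition slope (g : R -> R) (p d y : R) : R :=
  if Req_EM_T y p then d else (g y - g p) / (y - p).

Lemma slope_eq g p d y : y <> p -> slope g p d y = (g y - g p) / (y - p).
Proof. intros; unfold slope; destruct Req_EM_T; [contradiction|reflexivity]. Qed.

Lemma slope_cont01 g g' p : I01 p -> has_deriv01 g g' -> cont01 (slope g p (g' p)).
Proof.
  intros Hp Hd x Hx.
  destruct (Req_dec x p) as [->|Hne].
  - intros eps Heps. destruct (Hd p Hp eps Heps) as [alp [Halp H]].
    exists alp; split; [exact Halp|]. intros y [Hy Hdy].
    unfold slope. destruct (Req_EM_T p p) as [_|]; [|congruence].
    destruct (Req_EM_T y p) as [->|Hyp].
    + rewrite R_dist_eq; exact Heps.
    + apply H; auto.
  - assert (L : limit1_in (fun y => (g y - g p) / (y - p)) I01 ((g x - g p) / (x - p)) x).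
    { apply limit_mul.
      - apply limit_minus; [apply (deriv01_cont01 g g'); auto|apply cont01_const; auto].
      - apply limit_inv; [|lra]. apply limit_minus; [apply lim_x|apply cont01_const; auto]. }
    intros eps Heps. destruct (L eps Heps) as [alp [Halp H]].
    assert (Hm : 0 < Rmin alp (Rabs (x - p))) by (apply Rmin_pos; [lra|apply Rabs_pos_lt; lra]).
    exists (Rmin alp (Rabs (x - p))); split; [exact Hm|].
    intros y [Hy Hdy]; simpl in *; unfold R_dist in *.
    rewrite (slope_eq _ _ _ x Hne).
    destruct (Req_dec y p) as [->|Hyp].
    + exfalso.
      assert (Rabs (p - x) < Rabs (x - p)) by (eapply Rlt_le_trans; [apply Hdy|apply Rmin_r]).
      rewrite <- Rabs_Ropp in H0. replace (- (p - x)) with (x - p) in H0 by ring. lra.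
    + rewrite slope_eq by exact Hyp. apply H; split; [exact Hy|].
      eapply Rlt_le_trans; [apply Hdy|apply Rmin_l].
Qed.

(* At a common zero [p], [f / g] is the quotient of the slopes, continuous when [g' p <> 0]. *)
Lemma cont01_quotient_extension f f' g g' p : I01 p ->
  has_deriv01 f f' -> has_deriv01 g g' -> f p = 0 -> g p = 0 -> g' p <> 0 ->
  (forall x, I01 x -> x <> p -> g x <> 0) ->
  exists h, cont01 h /\ forall x, I01 x -> x <> p -> h x = f x / g x.
Proof.
  intros Hp Hf Hg Hf0 Hg0 Hg'0 Hgx.
  exists (fun x => slope f p (f' p) x / slope g p (g' p) x). split.
  - apply cont01_div; [apply (slope_cont01 f f')|apply (slope_cont01 g g')|]; auto.
    intros x Hx. destruct (Req_dec x p) as [->|Hne].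
    + unfold slope; destruct Req_EM_T; [exact Hg'0|congruence].
    + rewrite slope_eq, Hg0 by exact Hne. specialize (Hgx x Hx Hne).
      unfold Rdiv; rewrite Rminus_0_r. apply Rmult_integral_contrapositive; split; [exact Hgx|].
      apply Rinv_neq_0_compat; lra.
  - intros x Hx Hne. rewrite !slope_eq, Hf0, Hg0 by exact Hne.
    specialize (Hgx x Hx Hne). field; split; lra.
Qed.

Lemma is_RInt_interior_derive (G g : R -> R) : cont01 G -> cont01 g ->
  (forall x, 0 < x < 1 -> is_derive G x (g x)) -> is_RInt g 0 1 (G 1 - G 0).
Proof.
  intros HG Hg Hd.
  set (gc := fun x => g (clamp 0 1 x)).
  assert (Hgc : forall x, continuous gc x)
    by (intros; apply continuity_pt_filterlim, continuity_pt_clamp, Hg).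
  assert (Hex : forall a b, ex_RInt gc a b)
    by (intros; apply (ex_RInt_continuous (V := R_CompleteNormedModule)); auto).
  assert (Hprim : forall x, is_derive (fun y => RInt gc 0 y) x (gc x)).
  { intros x. apply (is_derive_RInt gc (fun y => RInt gc 0 y) 0 x); [|apply Hgc].
    apply filter_forall. intros; apply (RInt_correct (V := R_CompleteNormedModule)), Hex. }
  (* MVT: [RInt gc 0 y - G y] is constant on [[0,1]]. *)
  destruct (MVT_gen (fun y => RInt gc 0 y - G (clamp 0 1 y)) 0 1 (fun _ => 0)) as [z [_ Hz]].
  - rewrite Rmin_left, Rmax_right by lra. intros x Hx.
    apply is_derive_ext_loc with (fun y => RInt gc 0 y - G y).
    + apply (locally_interval _ x (Finite 0) (Finite 1)); simpl; try lra.
      intros y H0 H1. rewrite clamp_id by lra. reflexivity.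
    + assert (E : gc x - g x = 0) by (unfold gc; rewrite clamp_id by lra; ring).
      pose proof (derivable_pt_lim_minus _ _ x _ _
        (proj1 (is_derive_Reals _ _ _) (Hprim x)) (proj1 (is_derive_Reals _ _ _) (Hd x Hx))) as D.
      rewrite E in D. apply is_derive_Reals, D.
  - rewrite Rmin_left, Rmax_right by lra. intros x Hx.
    apply continuity_pt_minus.
    + apply continuity_pt_filterlim.
      apply (ex_derive_continuous (K := R_AbsRing) (V := R_NormedModule) (fun y => RInt gc 0 y)).
      eexists; apply Hprim.
    + apply (continuity_pt_clamp G HG).
  - rewrite RInt_point, !clamp_id in Hz by lra. change (zero : R) with 0 in Hz.
    apply is_RInt_ext with gc.
    + rewrite Rmin_left, Rmax_right by lra. intros x Hx.
      unfold gc. rewrite clamp_id by lra. reflexivity.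
    + replace (G 1 - G 0) with (RInt gc 0 1) by lra.
      apply (RInt_correct (V := R_CompleteNormedModule)), Hex.
Qed.

Lemma Riemann_of_is_RInt f a b l : is_RInt f a b l -> Defs.is_RInt f a b l.
Proof.
  intros H. exists (ex_RInt_Reals_0 _ _ _ (ex_intro _ l H)).
  rewrite <- RInt_Reals. apply is_RInt_unique, H.
Qed.

Lemma derive_zero_on (f : R -> R) p q s l : p < s < q -> is_derive f s l ->
  (forall s', p < s' < q -> f s' = 0) -> l = 0.
Proof.
  intros Hs Hd Hz.
  assert (H : is_derive (fun _ : R => 0) s l).
  { apply is_derive_ext_loc with f; [|exact Hd].
    apply (locally_interval _ s (Finite p) (Finite q)); simpl; try lra.
    intros y H0 H1. apply Hz; lra. }
  apply is_derive_unique in H. rewrite <- H. apply is_derive_unique.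
  apply (is_derive_const (K := R_AbsRing) (V := R_NormedModule)).
Qed.

(** * Functions on [[0,1] x (0,T)] *)

(* Clamping [s] to [[a,b]] with [0 < a <= b < T] turns a function on [[0,1] x (0,T)]
   into one on [R x R], where Coquelicot's two-variable continuity applies. *)
Definition extend2 (a b : R) (F : R -> R -> R) (s x : R) : R := F (clamp 0 1 x) (clamp a b s).

Lemma continuity_2d_pt_extend2 T F a b : cont2 T F -> 0 < a -> a <= b -> b < T ->
  forall s x, continuity_2d_pt (extend2 a b F) s x.
Proof.
  intros HF Ha Hab Hb s x eps.
  assert (Hs : forall s, 0 < clamp a b s < T) by (intros s'; pose proof (clamp_in a b s' Hab); lra).
  destruct (HF _ _ (conj (I01_clamp x) (Hs s)) eps (cond_pos eps)) as [d [Hd H]].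
  exists (mkposreal d Hd). intros s' x' H1 H2; simpl in *.
  apply H; [split; [apply I01_clamp|apply Hs]| |];
    eapply Rle_lt_trans; try apply clamp_lipschitz; assumption.
Qed.

Lemma continuity_2d_pt_clamp f : cont01 f ->
  forall s x, continuity_2d_pt (fun _ x => f (clamp 0 1 x)) s x.
Proof.
  intros Hf s x.
  apply (continuity_1d_2d_pt_comp (fun y => f (clamp 0 1 y)) (fun _ y => y)).
  - apply continuity_pt_clamp, Hf.
  - apply continuity_2d_pt_id2.
Qed.

Lemma cont01_of_extend2 F a b t : a <= t <= b ->
  (forall s x, continuity_2d_pt (extend2 a b F) s x) -> cont01 (fun x => F x t).
Proof.
  intros Ht HF. apply cont01_of_continuity_pt_clamp. intros x eps Heps.
  destruct (HF t x (mkposreal eps Heps)) as [d Hd].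
  exists d; split; [apply cond_pos|].
  intros y [_ Hy]; simpl in *; unfold R_dist in *.
  specialize (Hd t y). unfold extend2 in Hd. rewrite (clamp_id a b t Ht) in Hd.
  apply Hd; [rewrite Rminus_diag, Rabs_R0; apply cond_pos|exact Hy].
Qed.

Lemma continuity_pt_locally_bounded f x : continuity_pt f x ->
  exists d, 0 < d /\ forall y, Rabs (y - x) < d -> Rabs (f y) <= Rabs (f x) + 1.
Proof.
  intros Hf. destruct (Hf 1 Rlt_0_1) as [d [Hd H]].
  exists d; split; [exact Hd|]. intros y Hy.
  destruct (Req_dec x y) as [<-|Hne]; [lra|].
  assert (Rabs (f y - f x) < 1) by (apply (H y); repeat split; auto).
  pose proof (Rabs_triang_inv (f y) (f x)). lra.
Qed.

Lemma continuity_2d_pt_mult_vanishing g k s x : continuity_2d_pt k s x -> k s x = 0 ->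
  (exists B, locally_2d (fun s' x' => Rabs (g s' x') <= B) s x) ->
  continuity_2d_pt (fun s' x' => g s' x' * k s' x') s x.
Proof.
  intros Hk Hk0 [B [d HB]] eps.
  set (B' := Rabs B + 1).
  assert (HB' : 0 < B') by (unfold B'; pose proof (Rabs_pos B); lra).
  destruct (Hk (mkposreal (eps / B') (Rdiv_lt_0_compat _ _ (cond_pos eps) HB'))) as [d' Hd'].
  exists (mkposreal _ (Rmin_pos _ _ (cond_pos d) (cond_pos d'))). intros s' x' H1 H2; simpl in *.
  rewrite Hk0, Rmult_0_r, Rminus_0_r, Rabs_mult.
  assert (Hg : Rabs (g s' x') <= B).
  { apply HB; eapply Rlt_le_trans; eauto; apply Rmin_l. }
  assert (Hkk : Rabs (k s' x') < eps / B').
  { specialize (Hd' s' x'). rewrite Hk0, Rminus_0_r in Hd'.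
    apply Hd'; eapply Rlt_le_trans; eauto; apply Rmin_r. }
  apply Rle_lt_trans with (B' * Rabs (k s' x')).
  { apply Rmult_le_compat_r; [apply Rabs_pos|]. unfold B'. pose proof (Rle_abs B); lra. }
  apply Rlt_le_trans with (B' * (eps / B')).
  { apply Rmult_lt_compat_l; auto. }
  right; field; lra.
Qed.

Lemma cont2_minus_cont01 T f g : cont2 T f -> cont01 g -> cont2 T (fun x s => f x s - g x).
Proof.
  intros Hf Hg x t HD eps He.
  destruct (Hf x t HD (eps/2)) as [d1 [Hd1 H1]]; [lra|].
  destruct (Hg x (proj1 HD) (eps/2)) as [d2 [Hd2 H2]]; [lra|].
  exists (Rmin d1 d2); split; [apply Rmin_pos; auto|].
  intros y s HD' Hy Hs.
  pose proof (Rmin_l d1 d2); pose proof (Rmin_r d1 d2).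
  assert (A1 := H1 y s HD' ltac:(lra) ltac:(lra)).
  assert (A2 : Rabs (g y - g x) < eps / 2).
  { apply (H2 y). split; [apply (proj1 HD')|simpl; unfold R_dist; lra]. }
  replace (f y s - g y - (f x t - g x)) with ((f y s - f x t) - (g y - g x)) by ring.
  eapply Rle_lt_trans; [apply Rabs_triang|]. rewrite Rabs_Ropp. lra.
Qed.

Lemma cont2_ext T f g : cont2 T f -> (forall x t, Dom T x t -> f x t = g x t) -> cont2 T g.
Proof.
  intros Hf E x t HD eps He. destruct (Hf x t HD eps He) as [d [Hd H]].
  exists d; split; [exact Hd|]. intros y s HD' H1 H2. rewrite <- !E by assumption. auto.
Qed.

Definition reldev_prod (g z : R -> R) (f k : R -> R -> R) (x s : R) : R :=
  g x * ((f x s - z x) / z x) * k x s.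

(* Where [z] vanishes, [(f - z) / z] is merely bounded, but then [k] vanishes. *)
Lemma continuity_2d_pt_reldev_prod T g z f k a b :
  cont01 g -> cont01 z -> cont2 T f -> cont2 T k ->
  (forall x, I01 x -> z x = 0 ->
     (forall s, 0 < s < T -> k x s = 0) /\
     exists B, forall y s, Dom T y s -> Rabs (y - x) < 1/2 -> Rabs ((f y s - z y) / z y) <= B) ->
  0 < a -> a <= b -> b < T ->
  forall s x, continuity_2d_pt (extend2 a b (reldev_prod g z f k)) s x.
Proof.
  intros Hg Hz Hf Hk Hzero Ha Hab Hb s x.
  assert (Hs : forall s, 0 < clamp a b s < T) by (intros s'; pose proof (clamp_in a b s' Hab); lra).
  destruct (Req_dec (z (clamp 0 1 x)) 0) as [Hz0|Hz0].
  - destruct (Hzero _ (I01_clamp x) Hz0) as [Hk0 [B HB]].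
    destruct (continuity_pt_locally_bounded _ x (continuity_pt_clamp g Hg x)) as [d [Hd Hgd]].
    apply continuity_2d_pt_ext with (fun s' x' =>
      (g (clamp 0 1 x') * ((extend2 a b f s' x' - z (clamp 0 1 x')) / z (clamp 0 1 x')))
      * extend2 a b k s' x').
    { reflexivity. }
    apply continuity_2d_pt_mult_vanishing.
    + apply (continuity_2d_pt_extend2 T); auto.
    + apply Hk0, Hs.
    + exists ((Rabs (g (clamp 0 1 x)) + 1) * B).
      exists (mkposreal _ (Rmin_pos d (1/2) Hd ltac:(lra))). intros s' x' _ H2; simpl in *.
      pose proof (Rmin_l d (1/2)); pose proof (Rmin_r d (1/2)).
      rewrite Rabs_mult. apply Rmult_le_compat; try apply Rabs_pos.
      * apply Hgd; lra.
      * apply HB; [split; [apply I01_clamp|apply Hs]|].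
        eapply Rle_lt_trans; [apply clamp_lipschitz|lra].
  - apply continuity_2d_pt_ext with (fun s' x' =>
      g (clamp 0 1 x') * ((extend2 a b f s' x' - z (clamp 0 1 x')) * / z (clamp 0 1 x'))
      * extend2 a b k s' x').
    { reflexivity. }
    apply continuity_2d_pt_mult; [apply continuity_2d_pt_mult|].
    + apply continuity_2d_pt_clamp, Hg.
    + apply continuity_2d_pt_mult.
      * apply continuity_2d_pt_minus;
          [apply (continuity_2d_pt_extend2 T); auto|apply continuity_2d_pt_clamp, Hz].
      * apply continuity_2d_pt_inv; [apply continuity_2d_pt_clamp, Hz|exact Hz0].
    + apply (continuity_2d_pt_extend2 T); auto.
Qed.

Lemma Rabs_rel_dev_le w z y m K : 0 < m -> 0 < y -> 0 <= w -> w <= K * y -> m <= z / y ->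
  Rabs ((w - z) / z) <= Rabs K / m + 1.
Proof.
  intros Hm Hy Hw HwK Hz.
  assert (Hz' : m * y <= z).
  { replace z with (z / y * y) by (field; lra). apply Rmult_le_compat_r; lra. }
  assert (Hzp : 0 < z) by nra.
  assert (HK : w <= Rabs K * y) by (pose proof (Rle_abs K); nra).
  unfold Rdiv. rewrite Rabs_mult, (Rabs_inv z), (Rabs_right z) by lra.
  assert (H1 : Rabs (w - z) <= w + z) by (unfold Rabs; destruct Rcase_abs; lra).
  assert (H2 : w * / z <= Rabs K / m).
  { apply Rmult_le_reg_r with (z * m); [nra|].
    replace (w * / z * (z * m)) with (w * m) by (field; lra).
    replace (Rabs K / m * (z * m)) with (Rabs K * z) by (field; lra).
    pose proof (Rabs_pos K). nra. }
  apply Rle_trans with ((w + z) * / z).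
  { apply Rmult_le_compat_r; [left; apply Rinv_0_lt_compat; lra|exact H1]. }
  replace ((w + z) * / z) with (w * / z + 1) by (field; lra). lra.
Qed.


(** * The flux identity *)

Definition Jform (uh vh u v ub vb : R) : R :=
  uh ^ 2 * ((1 + u + v) * (ub ^ 2 + vb ^ 2) + 2 * vb ^ 2 * ub)
  + vh ^ 2 * ((1 + u + v) * (ub ^ 2 + vb ^ 2) + 2 * ub ^ 2 * vb)
  - 2 * uh * vh * (ub ^ 2 + vb ^ 2 + ub ^ 2 * vb + ub * vb ^ 2).

Lemma Jfun_Jform u v ub vb : Jfun u v ub vb = Jform ((u - ub) / ub) ((v - vb) / vb) u v ub vb.
Proof. reflexivity. Qed.

Lemma is_derive_flux_form (U Ub V Vb : R -> R) dU dUb dV dVb x l :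
  is_derive U x dU -> is_derive Ub x dUb -> is_derive V x dV -> is_derive Vb x dVb ->
  Ub x <> 0 -> Vb x <> 0 ->
  l = / 2 * ((dVb * Ub x - Vb x * dUb) / Ub x ^ 2 * (U x - Ub x) ^ 2
             + 2 * (Vb x / Ub x) * (U x - Ub x) * (dU - dUb)
             - ((dUb * Vb x - Ub x * dVb) / Vb x ^ 2 * (V x - Vb x) ^ 2
                + 2 * (Ub x / Vb x) * (V x - Vb x) * (dV - dVb))) ->
  is_derive (fun y => / 2 * (Vb y / Ub y * (U y - Ub y) ^ 2 - Ub y / Vb y * (V y - Vb y) ^ 2)) x l.
Proof.
  intros HU HUb HV HVb HUb0 HVb0 ->.
  auto_derive; [repeat split; auto; eexists; eassumption|].
  replace (Derive (fun y => U y) x) with dU by (symmetry; apply is_derive_unique, HU).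
  replace (Derive (fun y => Ub y) x) with dUb by (symmetry; apply is_derive_unique, HUb).
  replace (Derive (fun y => V y) x) with dV by (symmetry; apply is_derive_unique, HV).
  replace (Derive (fun y => Vb y) x) with dVb by (symmetry; apply is_derive_unique, HVb).
  field; auto.
Qed.

(* The computation of the paper: [- dG/dx = P_t / 2 + (alpha / 2) Q] once the equations
   of (S) are substituted. *)
Lemma flux_derivative_identity alpha c u v ub vb ut vt :
  c <> 0 -> ub <> 0 -> vb <> 0 -> 1 + u + v <> 0 -> 1 + ub + vb <> 0 ->
  - (2 * c * (vb * ((u - ub) / ub) * ut + ub * ((v - vb) / vb) * vt) / 2
     + alpha / 2 * (c * Jform ((u - ub) / ub) ((v - vb) / vb) u v ub vb
                    / ((1 + u + v) * (1 + ub + vb))))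
  = let U := c * u in let Ub := c * ub in let V := c * v in let Vb := c * vb in
    let dU := alpha * v / (1 + u + v) - u - ut in
    let dV := vt - (alpha * u / (1 + u + v) - v) in
    let dUb := alpha * vb / (1 + ub + vb) - ub in
    let dVb := - (alpha * ub / (1 + ub + vb) - vb) in
    / 2 * ((dVb * Ub - Vb * dUb) / Ub ^ 2 * (U - Ub) ^ 2 + 2 * (Vb / Ub) * (U - Ub) * (dU - dUb)
           - ((dUb * Vb - Ub * dVb) / Vb ^ 2 * (V - Vb) ^ 2
              + 2 * (Ub / Vb) * (V - Vb) * (dV - dVb))).
Proof. intros. unfold Jform. cbv zeta. field. repeat split; auto. Qed.

Section System.

Variables (bc : BC) (alpha T : R) (c ub vb dub dvb : R -> R).
Variables (u v ux vx ut vt Fu Fv : R -> R -> R).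
Hypothesis Hc : cont01 c.
Hypothesis Hcpos : forall x, I01 x -> c x > 0.
Hypothesis Hdub : has_deriv01 ub dub.
Hypothesis Hdvb : has_deriv01 vb dvb.
Hypothesis Hsu : has_deriv01 (fun x => c x * ub x)
  (fun x => alpha * vb x / (1 + ub x + vb x) - ub x).
Hypothesis Hsv : has_deriv01 (fun x => c x * vb x)
  (fun x => - (alpha * ub x / (1 + ub x + vb x) - vb x)).
Hypothesis Hux : pdx T u ux.
Hypothesis Hvx : pdx T v vx.
Hypothesis Hut : pdt T u ut.
Hypothesis Hvt : pdt T v vt.
Hypothesis Hcu : cont2 T u.
Hypothesis Hcv : cont2 T v.
Hypothesis Hcut : cont2 T ut.
Hypothesis Hcvt : cont2 T vt.
Hypothesis HFu : pdx T (fun x t => c x * u x t) Fu.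
Hypothesis HFv : pdx T (fun x t => c x * v x t) Fv.
Hypothesis Heq : forall x t, Dom T x t ->
  ut x t + Fu x t = alpha * v x t / (1 + u x t + v x t) - u x t /\
  vt x t - Fv x t = alpha * u x t / (1 + u x t + v x t) - v x t.
Hypothesis Hnonneg : forall x t, Dom T x t -> 0 <= u x t /\ 0 <= v x t.
Hypothesis Hbc : bc_hyp bc T c ub vb u v.

Let Hub : cont01 ub := deriv01_cont01 ub dub Hdub.
Let Hvb : cont01 vb := deriv01_cont01 vb dvb Hdvb.
Let I01_0 : I01 0 := conj (Rle_refl 0) Rle_0_1.
Let I01_1 : I01 1 := conj Rle_0_1 (Rle_refl 1).

Lemma bc_cases : (bc = PBC /\ bc_hyp PBC T c ub vb u v) \/ (bc = DBC /\ bc_hyp DBC T c ub vb u v).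
Proof. pose proof Hbc as HB. destruct bc; [left|right]; split; auto. Qed.

Lemma dbc_hyp : bc = DBC -> bc_hyp DBC T c ub vb u v.
Proof. intros E. rewrite <- E. exact Hbc. Qed.

(* The (DBC) bounds [m <= ub x / x], [m <= vb x / (1 - x)] extend to [[0,1]] via the slopes. *)
Lemma dbc_slopes_lower : bc = DBC -> exists m, 0 < m /\
  forall x, I01 x -> m <= slope ub 0 (dub 0) x /\ m <= - slope vb 1 (dvb 1) x.
Proof.
  intros E. destruct (dbc_hyp E) as [Hu0 [Hv1 [[m [M [Hm [_ Hb]]]] _]]].
  exists m; split; [exact Hm|]. intros x Hx. split.
  - apply (cont01_lower_bound (slope ub 0 (dub 0))); [exact Hx|apply (slope_cont01 ub dub); auto|].
    intros y Hy. rewrite slope_eq, Hu0, !Rminus_0_r by lra. apply Hb, Hy.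
  - apply (cont01_lower_bound (fun y => - slope vb 1 (dvb 1) y)); [exact Hx| |].
    + apply cont01_opp, (slope_cont01 vb dvb); auto.
    + intros y Hy. rewrite slope_eq, Hv1 by lra.
      replace (- ((vb y - 0) / (y - 1))) with (vb y / (1 - y)) by (field; lra). apply Hb, Hy.
Qed.

Lemma ub_pos_cases x : I01 x -> 0 < ub x \/ (bc = DBC /\ x = 0 /\ ub x = 0).
Proof.
  intros Hx. destruct bc_cases as [[_ [_ [_ [_ [Hpos _]]]]]|[E [Hu0 _]]].
  - left. apply Hpos, Hx.
  - destruct (Req_dec x 0) as [->|Hx0]; [right; auto|left].
    destruct (dbc_slopes_lower E) as [m [Hm Hs]].
    assert (H := proj1 (Hs x Hx)). rewrite slope_eq, Hu0, !Rminus_0_r in H by exact Hx0.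
    replace (ub x) with (x * (ub x / x)) by (field; exact Hx0).
    unfold I01 in Hx. apply Rmult_lt_0_compat; lra.
Qed.

Lemma vb_pos_cases x : I01 x -> 0 < vb x \/ (bc = DBC /\ x = 1 /\ vb x = 0).
Proof.
  intros Hx. destruct bc_cases as [[_ [_ [_ [_ [Hpos _]]]]]|[E [_ [Hv1 _]]]].
  - left. apply Hpos, Hx.
  - destruct (Req_dec x 1) as [->|Hx1]; [right; auto|left].
    destruct (dbc_slopes_lower E) as [m [Hm Hs]].
    assert (H := proj2 (Hs x Hx)). rewrite slope_eq, Hv1, Rminus_0_r in H by exact Hx1.
    replace (vb x) with ((1 - x) * - (vb x / (x - 1))) by (field; lra).
    unfold I01 in Hx. apply Rmult_lt_0_compat; lra.
Qed.

Lemma ub_nonneg x : I01 x -> 0 <= ub x.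
Proof. intros Hx. destruct (ub_pos_cases x Hx) as [H|[_ [_ H]]]; lra. Qed.

Lemma vb_nonneg x : I01 x -> 0 <= vb x.
Proof. intros Hx. destruct (vb_pos_cases x Hx) as [H|[_ [_ H]]]; lra. Qed.

Lemma dbc_rel_dev_bound : bc = DBC -> exists B, forall y s, Dom T y s ->
  (y < 1 -> Rabs ((u y s - ub y) / ub y) <= B) /\ (0 < y -> Rabs ((v y s - vb y) / vb y) <= B).
Proof.
  intros E. destruct (dbc_hyp E) as [Hu0 [Hv1 [[m [M [Hm [_ Hb]]]] [_ [K HK]]]]].
  exists (Rabs K / m + 1). intros y s HD.
  assert (HB : 0 <= Rabs K / m + 1) by (pose proof (Rabs_pos K); apply Rplus_le_le_0_compat;
    [apply Rdiv_le_0_compat|]; lra).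
  destruct (HK y s HD) as [HK1 HK2]. destruct (Hnonneg y s HD) as [Hn1 Hn2].
  destruct HD as [Hy _]. unfold I01 in Hy.
  split; intros Hy'.
  - destruct (Req_dec y 0) as [->|Hy0].
    + rewrite Hu0, Rdiv_0_r, Rabs_R0. exact HB.
    + apply Rabs_rel_dev_le with y; try lra. apply Hb; lra.
  - destruct (Req_dec y 1) as [->|Hy1].
    + rewrite Hv1, Rdiv_0_r, Rabs_R0. exact HB.
    + apply Rabs_rel_dev_le with (1 - y); try lra. apply Hb; lra.
Qed.

Lemma dbc_ut_0 : bc = DBC -> forall s, 0 < s < T -> ut 0 s = 0.
Proof.
  intros E s Hs. destruct (dbc_hyp E) as [_ [_ [_ [Hz _]]]].
  apply (derive_zero_on (fun s => u 0 s) 0 T s); [exact Hs| |intros; apply Hz; auto].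
  apply is_derive_Reals, Hut. split; [exact I01_0|exact Hs].
Qed.

Lemma dbc_vt_1 : bc = DBC -> forall s, 0 < s < T -> vt 1 s = 0.
Proof.
  intros E s Hs. destruct (dbc_hyp E) as [_ [_ [_ [Hz _]]]].
  apply (derive_zero_on (fun s => v 1 s) 0 T s); [exact Hs| |intros; apply Hz; auto].
  apply is_derive_Reals, Hvt. split; [exact I01_1|exact Hs].
Qed.

Lemma reldev_prod_u_continuity k a b :
  cont2 T k -> (bc = DBC -> forall s, 0 < s < T -> k 0 s = 0) -> 0 < a -> a <= b -> b < T ->
  forall s x, continuity_2d_pt (extend2 a b (reldev_prod vb ub u k)) s x.
Proof.
  intros Hk Hk0 Ha Hab Hb. apply (continuity_2d_pt_reldev_prod T); auto.
  intros x Hx Hz. destruct (ub_pos_cases x Hx) as [Hp|[E [-> _]]]; [lra|].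
  split; [apply Hk0, E|].
  destruct (dbc_rel_dev_bound E) as [B HB]. exists B. intros y s HD Hy.
  apply (HB y s HD). apply Rabs_def2 in Hy. lra.
Qed.

Lemma reldev_prod_v_continuity k a b :
  cont2 T k -> (bc = DBC -> forall s, 0 < s < T -> k 1 s = 0) -> 0 < a -> a <= b -> b < T ->
  forall s x, continuity_2d_pt (extend2 a b (reldev_prod ub vb v k)) s x.
Proof.
  intros Hk Hk0 Ha Hab Hb. apply (continuity_2d_pt_reldev_prod T); auto.
  intros x Hx Hz. destruct (vb_pos_cases x Hx) as [Hp|[E [-> _]]]; [lra|].
  split; [apply Hk0, E|].
  destruct (dbc_rel_dev_bound E) as [B HB]. exists B. intros y s HD Hy.
  apply (HB y s HD). apply Rabs_def2 in Hy. lra.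
Qed.

Definition du x s := u x s - ub x.
Definition dv x s := v x s - vb x.

Definition dens x s := Hdens (c x) (ub x) (vb x) (u x s) (v x s).
Definition dens_t x s := 2 * c x * (reldev_prod vb ub u ut x s + reldev_prod ub vb v vt x s).
Definition flux x s := c x ^ 2 / 2 * (reldev_prod vb ub u du x s - reldev_prod ub vb v dv x s).
Definition dissip x s := c x * Jfun (u x s) (v x s) (ub x) (vb x)
  / ((1 + u x s + v x s) * (1 + ub x + vb x)).

Lemma dens_reldev_prod x s :
  dens x s = c x * (reldev_prod vb ub u du x s + reldev_prod ub vb v dv x s).
Proof. unfold dens, Hdens, reldev_prod, du, dv, Rdiv. ring. Qed.

Lemma dens_is_derive_t x s : Dom T x s -> is_derive (fun s => dens x s) s (dens_t x s).
Proof.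
  intros HD. assert (HDu := proj2 (is_derive_Reals _ _ _) (Hut x s HD)).
  assert (HDv := proj2 (is_derive_Reals _ _ _) (Hvt x s HD)).
  unfold dens, Hdens. auto_derive; [repeat split; eexists; eassumption|].
  replace (Derive (fun s => u x s) s) with (ut x s) by (symmetry; apply is_derive_unique, HDu).
  replace (Derive (fun s => v x s) s) with (vt x s) by (symmetry; apply is_derive_unique, HDv).
  unfold dens_t, reldev_prod, Rdiv. ring.
Qed.

Lemma cont2_du : cont2 T du.
Proof. apply cont2_minus_cont01; assumption. Qed.

Lemma cont2_dv : cont2 T dv.
Proof. apply cont2_minus_cont01; assumption. Qed.

Lemma dbc_du_0 : bc = DBC -> forall s, 0 < s < T -> du 0 s = 0.
Proof.
  intros E s Hs. destruct (dbc_hyp E) as [Hu0 [_ [_ [Hz _]]]].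
  unfold du. rewrite Hu0, (proj1 (Hz s Hs)). ring.
Qed.

Lemma dbc_dv_1 : bc = DBC -> forall s, 0 < s < T -> dv 1 s = 0.
Proof.
  intros E s Hs. destruct (dbc_hyp E) as [_ [Hv1 [_ [Hz _]]]].
  unfold dv. rewrite Hv1, (proj2 (Hz s Hs)). ring.
Qed.

Section Window.
Variables a b : R.
Hypothesis Hab : 0 < a <= b /\ b < T.

Lemma dens_continuity s x : continuity_2d_pt (extend2 a b dens) s x.
Proof.
  apply continuity_2d_pt_ext with (fun s x =>
    c (clamp 0 1 x) * (extend2 a b (reldev_prod vb ub u du) s x
                       + extend2 a b (reldev_prod ub vb v dv) s x)).
  { intros; unfold extend2; rewrite dens_reldev_prod; reflexivity. }
  apply continuity_2d_pt_mult; [apply continuity_2d_pt_clamp, Hc|apply continuity_2d_pt_plus].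
  - apply reldev_prod_u_continuity; [apply cont2_du|apply dbc_du_0|lra..].
  - apply reldev_prod_v_continuity; [apply cont2_dv|apply dbc_dv_1|lra..].
Qed.

Lemma dens_t_continuity s x : continuity_2d_pt (extend2 a b dens_t) s x.
Proof.
  apply continuity_2d_pt_ext with (fun s x => (2 * c (clamp 0 1 x)) *
    (extend2 a b (reldev_prod vb ub u ut) s x + extend2 a b (reldev_prod ub vb v vt) s x)).
  { intros; reflexivity. }
  apply continuity_2d_pt_mult; [apply continuity_2d_pt_mult|apply continuity_2d_pt_plus].
  - apply continuity_2d_pt_const.
  - apply continuity_2d_pt_clamp, Hc.
  - apply reldev_prod_u_continuity; [exact Hcut|apply dbc_ut_0|lra..].
  - apply reldev_prod_v_continuity; [exact Hcvt|apply dbc_vt_1|lra..].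
Qed.

Lemma flux_continuity s x : continuity_2d_pt (extend2 a b flux) s x.
Proof.
  apply continuity_2d_pt_ext with (fun s x => (c (clamp 0 1 x) * c (clamp 0 1 x) * / 2) *
    (extend2 a b (reldev_prod vb ub u du) s x - extend2 a b (reldev_prod ub vb v dv) s x)).
  { intros; unfold extend2, flux, Rdiv; ring. }
  apply continuity_2d_pt_mult; [apply continuity_2d_pt_mult|apply continuity_2d_pt_minus].
  - apply continuity_2d_pt_mult; apply continuity_2d_pt_clamp, Hc.
  - apply continuity_2d_pt_const.
  - apply reldev_prod_u_continuity; [apply cont2_du|apply dbc_du_0|lra..].
  - apply reldev_prod_v_continuity; [apply cont2_dv|apply dbc_dv_1|lra..].
Qed.

End Window.

Lemma flux_boundary t : 0 < t < T -> flux 0 t = flux 1 t.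
Proof.
  intros Ht. destruct bc_cases as [[_ [Hc01 [Hu01 [Hv01 [_ Hper]]]]]|[_ [Hu0 [Hv1 [_ [Hz _]]]]]].
  - destruct (Hper t Ht) as [Hper_u Hper_v].
    unfold flux, reldev_prod, du, dv. rewrite Hc01, Hu01, Hv01, Hper_u, Hper_v. reflexivity.
  - destruct (Hz t Ht) as [Hz0 Hz1].
    unfold flux, reldev_prod, du, dv. rewrite Hu0, Hv1, Hz0, Hz1, !Rminus_0_r, Rdiv_0_r.
    ring.
Qed.

Section FixedTime.
Variable t : R.
Hypothesis Ht : 0 < t < T.

Lemma rel_u_extension : exists U, cont01 U /\ forall x, 0 < x < 1 -> U x = (u x t - ub x) / ub x.
Proof.
  assert (Hu : cont01 (fun x => u x t)) by exact (deriv01_cont01 _ _ (Hux t Ht)).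
  destruct bc_cases as [[E _]|[E [Hu0 [_ [_ [Hz _]]]]]].
  - exists (fun x => (u x t - ub x) / ub x). split; [|reflexivity].
    apply cont01_div; [apply cont01_minus; assumption|exact Hub|].
    intros x Hx. destruct (ub_pos_cases x Hx) as [H|[E' _]]; [lra|congruence].
  - destruct (dbc_slopes_lower E) as [m [Hm Hs]].
    assert (Hdub0 : dub 0 <> 0).
    { assert (H := proj1 (Hs 0 I01_0)). unfold slope in H.
      destruct Req_EM_T; [lra|congruence]. }
    destruct (cont01_quotient_extension (fun x => u x t) (fun x => ux x t) ub dub 0)
      as [h [Hh Hheq]]; auto.
    + apply (proj1 (Hz t Ht)).
    + intros x Hx Hx0. destruct (ub_pos_cases x Hx) as [H|[_ [H _]]]; [lra|contradiction].
    + exists (fun x => h x - 1). split; [apply cont01_minus; [exact Hh|apply cont01_const]|].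
      intros x Hx. rewrite Hheq by (unfold I01; lra).
      destruct (ub_pos_cases x ltac:(unfold I01; lra)) as [H|[_ [H _]]]; [|lra].
      field. lra.
Qed.

Lemma rel_v_extension : exists V, cont01 V /\ forall x, 0 < x < 1 -> V x = (v x t - vb x) / vb x.
Proof.
  assert (Hv : cont01 (fun x => v x t)) by exact (deriv01_cont01 _ _ (Hvx t Ht)).
  destruct bc_cases as [[E _]|[E [_ [Hv1 [_ [Hz _]]]]]].
  - exists (fun x => (v x t - vb x) / vb x). split; [|reflexivity].
    apply cont01_div; [apply cont01_minus; assumption|exact Hvb|].
    intros x Hx. destruct (vb_pos_cases x Hx) as [H|[E' _]]; [lra|congruence].
  - destruct (dbc_slopes_lower E) as [m [Hm Hs]].
    assert (Hdvb1 : dvb 1 <> 0).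
    { assert (H := proj2 (Hs 1 I01_1)). unfold slope in H.
      destruct Req_EM_T; [lra|congruence]. }
    destruct (cont01_quotient_extension (fun x => v x t) (fun x => vx x t) vb dvb 1)
      as [h [Hh Hheq]]; auto.
    + apply (proj2 (Hz t Ht)).
    + intros x Hx Hx1. destruct (vb_pos_cases x Hx) as [H|[_ [H _]]]; [lra|contradiction].
    + exists (fun x => h x - 1). split; [apply cont01_minus; [exact Hh|apply cont01_const]|].
      intros x Hx. rewrite Hheq by (unfold I01; lra).
      destruct (vb_pos_cases x ltac:(unfold I01; lra)) as [H|[_ [H _]]]; [|lra].
      field. lra.
Qed.

Lemma dissip_extension : exists D, cont01 D /\ forall x, 0 < x < 1 -> D x = dissip x t.
Proof.
  destruct rel_u_extension as [U [HU HUeq]]. destruct rel_v_extension as [V [HV HVeq]].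
  assert (Hu : cont01 (fun x => u x t)) by exact (deriv01_cont01 _ _ (Hux t Ht)).
  assert (Hv : cont01 (fun x => v x t)) by exact (deriv01_cont01 _ _ (Hvx t Ht)).
  exists (fun x => c x * Jform (U x) (V x) (u x t) (v x t) (ub x) (vb x)
    / ((1 + u x t + v x t) * (1 + ub x + vb x))). split.
  - unfold Jform.
    repeat first [apply cont01_div | apply cont01_minus | apply cont01_plus
                 | apply cont01_mult | apply cont01_pow | apply cont01_const | assumption].
    intros x Hx. destruct (Hnonneg x t (conj Hx Ht)).
    pose proof (ub_nonneg x Hx). pose proof (vb_nonneg x Hx).
    apply Rgt_not_eq, Rmult_lt_0_compat; lra.
  - intros x Hx. unfold dissip. rewrite Jfun_Jform, HUeq, HVeq by exact Hx. reflexivity.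
Qed.

Lemma flux_is_derive_x x : 0 < x < 1 ->
  is_derive (fun y => flux y t) x (- (dens_t x t / 2 + alpha / 2 * dissip x t)).
Proof.
  intros Hx.
  assert (Hpos : forall y, 0 < y < 1 -> c y > 0 /\ ub y > 0 /\ vb y > 0).
  { intros y Hy. assert (Hy01 : I01 y) by (unfold I01; lra).
    destruct (ub_pos_cases y Hy01) as [H1|[_ [H1 _]]]; [|lra].
    destruct (vb_pos_cases y Hy01) as [H2|[_ [H2 _]]]; [|lra].
    repeat split; auto. }
  assert (Hx01 : I01 x) by (unfold I01; lra).
  destruct (Hpos x Hx) as [Hcx [Hubx Hvbx]].
  destruct (Hnonneg x t (conj Hx01 Ht)) as [Hu Hv].
  destruct (Heq x t (conj Hx01 Ht)) as [Eu Ev].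
  (* In terms of the fluxes [c u], [c ub], [c v], [c vb], whose x-derivatives (S) provides. *)
  apply is_derive_ext_loc with (fun y =>
    / 2 * ((c y * vb y) / (c y * ub y) * (c y * u y t - c y * ub y) ^ 2
           - (c y * ub y) / (c y * vb y) * (c y * v y t - c y * vb y) ^ 2)).
  { apply (locally_interval _ x (Finite 0) (Finite 1)); simpl; try lra.
    intros y H0 H1. destruct (Hpos y (conj H0 H1)) as [Hcy [Huby Hvby]].
    unfold flux, reldev_prod, du, dv. field. lra. }
  apply is_derive_flux_form with (dU := Fu x t) (dV := Fv x t)
    (dUb := alpha * vb x / (1 + ub x + vb x) - ub x)
    (dVb := - (alpha * ub x / (1 + ub x + vb x) - vb x)).
  - apply (deriv01_is_derive (fun y => c y * u y t) (fun y => Fu y t)); [apply HFu, Ht|exact Hx].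
  - apply (deriv01_is_derive _ _ _ Hsu Hx).
  - apply (deriv01_is_derive (fun y => c y * v y t) (fun y => Fv y t)); [apply HFv, Ht|exact Hx].
  - apply (deriv01_is_derive _ _ _ Hsv Hx).
  - apply Rgt_not_eq, Rmult_lt_0_compat; lra.
  - apply Rgt_not_eq, Rmult_lt_0_compat; lra.
  - replace (Fu x t) with (alpha * v x t / (1 + u x t + v x t) - u x t - ut x t) by lra.
    replace (Fv x t) with (vt x t - (alpha * u x t / (1 + u x t + v x t) - v x t)) by lra.
    unfold dens_t, dissip, reldev_prod. rewrite Jfun_Jform.
    apply flux_derivative_identity; lra.
Qed.

Lemma dens_t_integral_dissip : exists I', is_RInt (fun x => dissip x t) 0 1 I' /\
  / 2 * RInt (fun x => dens_t x t) 0 1 = - (alpha / 2) * I'.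
Proof.
  destruct dissip_extension as [D [HD HDeq]].
  assert (Hdt : cont01 (fun x => dens_t x t))
    by (apply (cont01_of_extend2 dens_t t t); [lra|apply dens_t_continuity; lra]).
  assert (Hfl : cont01 (fun x => flux x t))
    by (apply (cont01_of_extend2 flux t t); [lra|apply flux_continuity; lra]).
  assert (Hint : is_RInt (fun x => - (dens_t x t / 2 + alpha / 2 * D x)) 0 1 (flux 1 t - flux 0 t)).
  { apply (is_RInt_interior_derive (fun x => flux x t)); [exact Hfl| |].
    - apply cont01_opp, cont01_plus; apply cont01_mult;
        first [exact Hdt | exact HD | apply cont01_const].
    - intros x Hx. rewrite HDeq by exact Hx. apply flux_is_derive_x, Hx. }
  rewrite <- (flux_boundary t Ht), Rminus_diag in Hint.
  assert (Hlin : is_RInt (fun x => - (dens_t x t / 2 + alpha / 2 * D x)) 0 1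
    (- (/ 2 * RInt (fun x => dens_t x t) 0 1 + alpha / 2 * RInt D 0 1))).
  { apply (is_RInt_ext (fun x => opp (plus (scal (/ 2) (dens_t x t)) (scal (alpha / 2) (D x))))).
    { intros x _. unfold opp, plus, scal; simpl; unfold mult; simpl. field. }
    apply (is_RInt_opp (V := R_NormedModule)), (is_RInt_plus (V := R_NormedModule));
      apply (is_RInt_scal (V := R_NormedModule)), (RInt_correct (V := R_CompleteNormedModule));
      apply ex_RInt_cont01; assumption. }
  exists (RInt D 0 1). split.
  - apply is_RInt_ext with D.
    { rewrite Rmin_left, Rmax_right by lra. exact HDeq. }
    apply (RInt_correct (V := R_CompleteNormedModule)), ex_RInt_cont01, HD.
  - apply (is_RInt_unique (V := R_CompleteNormedModule)) in Hint, Hlin. lra.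
Qed.

End FixedTime.

Definition lyap_functional s := / 2 * RInt (fun x => dens x s) 0 1.

Lemma lyap_functional_is_derive t : 0 < t < T ->
  is_derive lyap_functional t (/ 2 * RInt (fun x => dens_t x t) 0 1).
Proof.
  intros Ht.
  set (a := t / 2). set (b := (t + T) / 2).
  assert (Hab : 0 < a <= b /\ b < T) by (unfold a, b; lra).
  set (f := fun s x => dens (clamp 0 1 x) s).
  assert (Hf_derive :
      forall s x, 0 < s < T -> is_derive (fun z => f z x) s (dens_t (clamp 0 1 x) s))
    by (intros s x Hs; apply dens_is_derive_t; split; [apply I01_clamp|exact Hs]).
  apply is_derive_ext with (fun s => / 2 * RInt (fun x => f s x) 0 1).
  { intros s. unfold lyap_functional. f_equal. apply RInt_ext. rewrite Rmin_left, Rmax_right by lra.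
    intros x Hx. unfold f. rewrite clamp_id by lra. reflexivity. }
  replace (RInt (fun x => dens_t x t) 0 1) with (RInt (fun x => Derive (fun z => f z x) t) 0 1).
  2: { apply RInt_ext. rewrite Rmin_left, Rmax_right by lra. intros x Hx.
       transitivity (dens_t (clamp 0 1 x) t); [apply is_derive_unique, Hf_derive, Ht|].
       rewrite clamp_id by lra. reflexivity. }
  apply is_derive_scal, (is_derive_RInt_param f 0 1 t).
  - apply (locally_interval _ t (Finite 0) (Finite T)); simpl; try lra.
    intros s H0 H1 x _. eexists. apply Hf_derive. lra.
  - intros x _.
    apply continuity_2d_pt_ext_loc with (extend2 a b dens_t); [|apply dens_t_continuity; lra].
    assert (Hd : 0 < Rmin (t - a) (b - t)) by (apply Rmin_pos; unfold a, b; lra).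
    exists (mkposreal _ Hd). intros s x' H1 _; simpl in *.
    pose proof (Rmin_l (t - a) (b - t)); pose proof (Rmin_r (t - a) (b - t)).
    apply Rabs_def2 in H1.
    rewrite (is_derive_unique _ _ _ (Hf_derive s x' ltac:(unfold a, b in *; lra))).
    unfold extend2. rewrite (clamp_id a b s) by lra. reflexivity.
  - apply (locally_interval _ t (Finite a) (Finite b)); simpl; try (unfold a, b; lra).
    intros s H0 H1. apply ex_RInt_ext with (fun x => dens x s).
    { rewrite Rmin_left, Rmax_right by lra. intros x Hx.
      unfold f. rewrite clamp_id by lra. reflexivity. }
    apply ex_RInt_cont01, (cont01_of_extend2 dens a b); [lra|apply dens_continuity, Hab].
Qed.

Lemma lyapunov_derivative : exists H : R -> R,
  forall t, 0 < t < T ->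
    (exists I, Defs.is_RInt (fun x => Hdens (c x) (ub x) (vb x) (u x t) (v x t)) 0 1 I
               /\ H t = / 2 * I) /\
    (exists I', Defs.is_RInt (fun x => c x * Jfun (u x t) (v x t) (ub x) (vb x)
                                 / ((1 + u x t + v x t) * (1 + ub x + vb x))) 0 1 I'
               /\ derivable_pt_lim H t (- (alpha / 2) * I')).
Proof.
  exists lyap_functional. intros t Ht. split.
  - exists (RInt (fun x => dens x t) 0 1). split; [|reflexivity].
    apply Riemann_of_is_RInt, (RInt_correct (V := R_CompleteNormedModule)), ex_RInt_cont01.
    apply (cont01_of_extend2 dens t t); [lra|apply dens_continuity; lra].
  - destruct (dens_t_integral_dissip t Ht) as [I' [HI' Hval]].
    exists I'. split; [exact (Riemann_of_is_RInt _ _ _ _ HI')|].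
    apply is_derive_Reals. rewrite <- Hval. apply lyap_functional_is_derive, Ht.
Qed.

End System.
End Lyapunov.

Theorem mainTheorem10
  (bc : BC) (alpha T : R) (c ub vb : R -> R) (u v : R -> R -> R)
  (Halpha : alpha > 0) (HT : T > 0)
  (Hc : C1_01 c) (Hcpos : forall x, I01 x -> c x > 0)
  (Hstat : stationary alpha c ub vb)
  (Hsol : solution T alpha c u v)
  (Hnonneg : forall x t, Dom T x t -> 0 <= u x t /\ 0 <= v x t)
  (Hbc : bc_hyp bc T c ub vb u v) :
  exists H : R -> R,
    forall t, 0 < t < T ->
      (exists I, is_RInt (fun x => Hdens (c x) (ub x) (vb x) (u x t) (v x t)) 0 1 I
                 /\ H t = / 2 * I) /\
      (exists I', is_RInt (fun x => c x * Jfun (u x t) (v x t) (ub x) (vb x)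
                             / ((1 + u x t + v x t) * (1 + ub x + vb x))) 0 1 I'
                 /\ derivable_pt_lim H t (- (alpha / 2) * I')).
Proof.
  destruct Hc as [dc [Hdc _]].
  destruct Hstat as [[dub [Hdub _]] [[dvb [Hdvb _]] [Hsu Hsv]]].
  destruct Hsol as [Cu [Cv [ut [vt [Fu [Fv [Hut [Hvt [HFu [HFv Heq]]]]]]]]]].
  destruct Cu as [ux [uft [Hux [Huft [Hcu [_ Hcuft]]]]]].
  destruct Cv as [vx [vft [Hvx [Hvft [Hcv [_ Hcvft]]]]]].
  (* [C1_2] and [solution] name the time derivatives
     independently; they agree. *)
  assert (Hcut : cont2 T ut).
  { apply (Lyapunov.cont2_ext T uft); [exact Hcuft|]. intros x t HD.
    apply (uniqueness_limite (fun s => u x s) t); auto. }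
  assert (Hcvt : cont2 T vt).
  { apply (Lyapunov.cont2_ext T vft); [exact Hcvft|]. intros x t HD.
    apply (uniqueness_limite (fun s => v x s) t); auto. }
  exact (Lyapunov.lyapunov_derivative bc alpha T c ub vb dub dvb u v ux vx ut vt Fu Fv
    (Lyapunov.deriv01_cont01 c dc Hdc) Hcpos Hdub Hdvb Hsu Hsv Hux Hvx Hut Hvt Hcu Hcv Hcut Hcvt
    HFu HFv Heq Hnonneg Hbc).
Qed.
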